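(* Let $(u,x)\in\mathrm{Bur}_n$ and $(v,y)\in\mathrm{Bur}_k$. Then $(v,y)\le(u,x)$ if and only if $(v,y)^T\le(u,x)^T$.
   Context: $\mathrm{Cay}_n$ is the set of Cayley permutations of length $n$ (words of positive integers in which every integer from $1$ to the maximum occurs), $\mathrm{WI}_n$ its weakly increasing elements. A pair $(u,v)\in\mathrm{WI}_n\times\mathrm{Cay}_n$ is a biword with columns $\binom{u(i)}{v(i)}$. The Burge transpose $(u,v)^T$ turns every column $\binom{a}{b}$ into $\binom{b}{a}$ and sorts the columns increasingly by top entry, ties by decreasing bottom entry. With $\mathrm{Des}(v)=\{i:v(i)\ge v(i+1)\}$, $\mathrm{Bur}_n=\{(u,v)\in\mathrm{WI}_n\times\mathrm{Cay}_n:\mathrm{Des}(u)\subseteq\mathrm{Des}(v)\}$; $T$ maps $\mathrm{Bur}_n$ to itself. Two words $a,b$ of the same length $k$ are order isomorphic if $a(s)<a(t)\iff b(s)<b(t)$ and $a(s)=a(t)\iff b(s)=b(t)$. For $(u',v')\in\mathrm{Bur}_k$, $(u,v)\in\mathrm{Bur}_n$: $(u',v')\le(u,v)$ iff there are indices $i_1<\dots<i_k$ such that $u(i_1)\cdots u(i_k)$ is order isomorphic to $u'$ and $v(i_1)\cdots v(i_k)$ is order isomorphic to $v'$. *)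

(* Words are 0-indexed sequences of naturals. *)
From mathcomp Require Import all_boot.
Set Implicit Arguments. Unset Strict Implicit. Unset Printing Implicit Defensive.

Definition cayley (w : seq nat) : bool :=
  all (fun a => 0 < a) w && all (fun j => j \in w) (iota 1 (\max_(a <- w) a)).

Definition Cay (n : nat) (w : seq nat) : bool := (size w == n) && cayley w.

Definition wincr (w : seq nat) : bool := sorted leq w.

Definition WI (n : nat) (w : seq nat) : bool := Cay n w && wincr w.

Definition is_des (w : seq nat) (i : nat) : bool :=
  (i.+1 < size w) && (nth 0 w i.+1 <= nth 0 w i).

Definition Bur (n : nat) (b : seq nat * seq nat) : Prop :=
  WI n b.1 /\ Cay n b.2 /\ (forall i, is_des b.1 i -> is_des b.2 i).

Definition col_le (p q : nat * nat) : bool :=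
  (p.1 < q.1) || ((p.1 == q.1) && (q.2 <= p.2)).

Definition burgeT (b : seq nat * seq nat) : seq nat * seq nat :=
  let cols := sort col_le [seq (c.2, c.1) | c <- zip b.1 b.2] in
  (unzip1 cols, unzip2 cols).

Definition order_iso (a b : seq nat) : Prop :=
  size a = size b /\
  forall s t, s < size a -> t < size a ->
    ((nth 0 a s < nth 0 a t) = (nth 0 b s < nth 0 b t)) /\
    ((nth 0 a s == nth 0 a t) = (nth 0 b s == nth 0 b t)).

Definition patle (p b : seq nat * seq nat) : Prop :=
  exists idx : seq nat,
    [/\ size idx = size p.1, sorted ltn idx, all (fun i => i < size b.1) idx,
        order_iso [seq nth 0 b.1 i | i <- idx] p.1 &
        order_iso [seq nth 0 b.2 i | i <- idx] p.2].

From Stdlib Require Import Setoid.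
From mathcomp Require Import all_boot.

(* Read a biword as its sequence of columns. An occurrence of a pattern is a
   list of pairs (host column, pattern column) whose top rows, and whose bottom
   rows, are order isomorphic; this condition is invariant under swapping every
   column and under permuting the pairs. Transposing the occurrence therefore
   gives an occurrence in the transposed biwords, once we know that sorting the
   pairs by host column also sorts the pattern columns: two agreeing pairs are
   compared identically by the column order. For the converse, the column
   sequence of an element of Bur is sorted for that order (equal tops sit at
   descents of the top row, hence of the bottom row), so the transpose is an
   involution there. *)

Lemma subseq_iotaE n (idx : seq nat) :
  subseq idx (iota 0 n) = sorted ltn idx && all (fun i => i < n) idx.
Proof.
apply/idP/andP => [sub_idx | [lt_idx idx_lt]].
  split; first exact: (subseq_sorted ltn_trans sub_idx (iota_ltn_sorted 0 n)).
  by apply/allP => i /(mem_subseq sub_idx); rewrite mem_iota.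
apply/(subseq_uniqP (iota_uniq 0 n)).
apply: (irr_sorted_eq ltn_trans ltnn lt_idx).
  exact: (sorted_filter ltn_trans _ (iota_ltn_sorted 0 n)).
move=> i; rewrite mem_filter mem_iota /=.
by apply/esym/andb_idr => /(allP idx_lt).
Qed.

Lemma subseq_nthP {T : eqType} (x0 : T) (s t : seq T) :
  subseq t s <-> exists2 idx, subseq idx (iota 0 (size s)) & t = map (nth x0 s) idx.
Proof.
have s_nth : map (nth x0 s) (iota 0 (size s)) = s by exact: mkseq_nth.
split => [/subseqP [m _ ->] | [idx sub_idx ->]].
  by exists (mask m (iota 0 (size s))); rewrite ?mask_subseq // map_mask s_nth.
by rewrite -[X in subseq _ X]s_nth map_subseq.
Qed.

Lemma all2rel_nthP {T : Type} (x0 : T) (r : rel T) (s : seq T) :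
  reflect (forall i j, i < size s -> j < size s -> r (nth x0 s i) (nth x0 s j))
          (all2rel r s).
Proof.
apply: (iffP (all_nthP x0)) => [rs i j lti ltj | rs i lti].
  exact: (all_nthP x0 (rs i lti)).
by apply/(all_nthP x0) => j; apply: rs.
Qed.

Definition cmp_agree (p q : nat * nat) : bool :=
  ((p.1 < q.1) == (p.2 < q.2)) && ((p.1 == q.1) == (p.2 == q.2)).

Lemma order_isoE (a b : seq nat) :
  order_iso a b <-> size a = size b /\ all2rel cmp_agree (zip a b).
Proof.
split=> [[eq_ab iso] | [eq_ab /(all2rel_nthP (0, 0)) agree]]; split=> //.
  apply/(all2rel_nthP (0, 0)) => s t; rewrite size_zip -eq_ab minnn => lts ltt.
  by rewrite !nth_zip // /cmp_agree /=; have [-> ->] := iso s t lts ltt; rewrite !eqxx.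
move=> s t lts ltt; have := agree s t; rewrite size_zip -eq_ab minnn !nth_zip //.
by move=> /(_ lts ltt) /andP[/eqP -> /eqP ->].
Qed.

Definition cols_agree (w w' : (nat * nat) * (nat * nat)) : bool :=
  cmp_agree (w.1.1, w.2.1) (w'.1.1, w'.2.1) && cmp_agree (w.1.2, w.2.2) (w'.1.2, w'.2.2).

Lemma all2rel_cols_agree W :
  all2rel cols_agree W <->
  order_iso (unzip1 (unzip1 W)) (unzip1 (unzip2 W)) /\
  order_iso (unzip2 (unzip1 W)) (unzip2 (unzip2 W)).
Proof.
rewrite !order_isoE /unzip1 /unzip2 !size_map -!map_comp !zip_map allrel_relI.
rewrite !allrel_mapl !allrel_mapr.
by split=> [/andP[agree1 agree2] | [[_ agree1] [_ agree2]]]; [|apply/andP].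
Qed.

(* [W] pairs each chosen column of [P] with the column of [Q] it plays. *)
Definition col_patle (Q P : seq (nat * nat)) : Prop :=
  exists W, [/\ subseq (unzip1 W) P, unzip2 W = Q & all2rel cols_agree W].

Lemma patle_colsE {b c : seq nat * seq nat} :
  size b.1 = size b.2 -> size c.1 = size c.2 ->
  patle c b <-> col_patle (zip c.1 c.2) (zip b.1 b.2).
Proof.
case: b c => u x [v y] /= eq_ux eq_vy.
have size_ux : size (zip u x) = size u by rewrite size_zip eq_ux minnn.
have [unzip1_vy unzip2_vy] : unzip1 (zip v y) = v /\ unzip2 (zip v y) = y.
  by rewrite unzip1_zip ?unzip2_zip ?eq_vy.
split=> [[idx [/= size_idx sorted_idx lt_idx iso_u iso_x]] | [W [sub_W eq_W]]].
- pose S := map (nth (0, 0) (zip u x)) idx.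
  have size_S : size S = size (zip v y).
    by rewrite size_map size_zip eq_vy minnn size_idx.
  exists (zip S (zip v y)); split.
  + rewrite unzip1_zip ?size_S //; apply/(subseq_nthP (0, 0)); exists idx => //.
    by rewrite size_ux subseq_iotaE sorted_idx.
  + by rewrite unzip2_zip ?size_S.
  apply/all2rel_cols_agree; rewrite unzip1_zip ?size_S // unzip2_zip ?size_S //.
  by rewrite unzip1_map_nth_zip // unzip2_map_nth_zip // unzip1_vy unzip2_vy.
move: sub_W => /(subseq_nthP (0, 0)) [idx].
rewrite size_ux subseq_iotaE => /andP[sorted_idx lt_idx] eq_S.
move/all2rel_cols_agree; rewrite eq_S eq_W.
rewrite unzip1_map_nth_zip // unzip2_map_nth_zip // unzip1_vy unzip2_vy => -[iso_u iso_x].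
exists idx; split=> //.
by case: iso_u; rewrite size_map.
Qed.

Lemma col_le_total : total col_le.
Proof.
move=> [a b] [c d]; rewrite /col_le /=.
by case: ltngtP => //= _; exact: leq_total.
Qed.

Lemma col_le_trans : transitive col_le.
Proof.
move=> [c d] [a b] [e f]; rewrite /col_le /=.
move=> /orP[lt_ca | /andP[/eqP <- le_dc]] /orP[lt_ae | /andP[/eqP <- le_fd]].
- by rewrite (ltn_trans lt_ca lt_ae).
- by rewrite lt_ca.
- by rewrite lt_ae.
- by rewrite eqxx (leq_trans le_fd le_dc) orbT.
Qed.

Lemma col_le_anti : antisymmetric col_le.
Proof.
move=> [a b] [c d]; rewrite /col_le /=.
by case: ltngtP => //= <- /anti_leq ->.
Qed.

Lemma cols_agree_col_le w w' : cols_agree w w' -> col_le w.1 w'.1 = col_le w.2 w'.2.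
Proof.
case: w w' => [[a b] [c d]] [[a' b'] [c' d']]; rewrite /cols_agree /cmp_agree /col_le /=.
move=> /andP[/andP[/eqP -> /eqP ->] /andP[/eqP lt_b _]].
by rewrite (leqNgt b') (leqNgt d') lt_b.
Qed.

Definition swap_col (c : nat * nat) : nat * nat := (c.2, c.1).

Lemma swap_colK : involutive swap_col. Proof. by case. Qed.

Definition burge_cols (P : seq (nat * nat)) : seq (nat * nat) :=
  sort col_le (map swap_col P).

Lemma zip_burgeT b : zip (burgeT b).1 (burgeT b).2 = burge_cols (zip b.1 b.2).
Proof. by rewrite /burgeT /= zip_unzip. Qed.

Lemma size_burgeT b : size (burgeT b).1 = size (burgeT b).2.
Proof. by rewrite /burgeT /= !size_map. Qed.

Lemma burge_colsK P : sorted col_le P -> burge_cols (burge_cols P) = P.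
Proof.
move=> sorted_P; apply: (sorted_eq col_le_trans col_le_anti) => //.
  exact: sort_sorted col_le_total _.
rewrite perm_sort -[X in perm_eq _ X](mapK swap_colK P).
by apply: perm_map; rewrite perm_sort.
Qed.

Lemma burge_cols_patle Q P : col_patle Q P -> col_patle (burge_cols Q) (burge_cols P).
Proof.
move=> [W [sub_W <- agree_W]].
pose swap_cols (w : (nat * nat) * (nat * nat)) := (swap_col w.1, swap_col w.2).
pose W' := sort (relpre fst col_le) (map swap_cols W).
have perm_W' : perm_eq W' (map swap_cols W) by rewrite perm_sort.
have agree_W' : all2rel cols_agree W'.
  rewrite (eq_allrel_mem2 _ (perm_mem perm_W') (perm_mem perm_W')).
  rewrite allrel_mapl allrel_mapr (eq_allrel (r' := cols_agree)) // => w w'.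
  exact: andbC.
exists W'; split=> //.
- have -> : unzip1 W' = burge_cols (unzip1 W).
    by rewrite /unzip1 /burge_cols -sort_map -!map_comp.
  exact/(subseq_sort col_le_total col_le_trans)/map_subseq.
- apply: (sorted_eq col_le_trans col_le_anti).
  + rewrite /unzip2 sorted_map.
    apply: (sub_in_sorted (P := mem W')) (allss _) (sort_sorted _ _).
      move=> w w' w_in w'_in /=.
      by rewrite (cols_agree_col_le _ _ (allrelP agree_W' w w' w_in w'_in)).
    by move=> w w'; apply: col_le_total.
  + exact: sort_sorted col_le_total _.
  + have := perm_map snd perm_W'; rewrite -map_comp => perm_snd.
    by rewrite perm_sym /burge_cols perm_sort perm_sym /unzip2 -map_comp.
Qed.

Lemma Bur_size {n b} : Bur n b -> size b.1 = size b.2.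
Proof. by case=> /andP[/andP[/eqP -> _] _] [/andP[/eqP -> _] _]. Qed.

Lemma Bur_sorted_cols {n b} : Bur n b -> sorted col_le (zip b.1 b.2).
Proof.
move=> Bb; case: b Bb (Bur_size Bb) => u x [/andP[_ sorted_u] [_ des_ux]] /= eq_ux.
apply/(sortedP (0, 0)) => i; rewrite size_zip -eq_ux minnn => lt_i.
rewrite !nth_zip // /col_le /=.
move/(sortedP 0): sorted_u => /(_ i lt_i).
rewrite leq_eqVlt => /orP[/eqP eq_ui | ->] //.
rewrite eq_ui ltnn eqxx /=.
have : is_des u i by rewrite /is_des lt_i eq_ui /=.
by move/des_ux => /andP[].
Qed.

Theorem lemma4p6 (n k : nat) (u x v y : seq nat) :
  Bur n (u, x) -> Bur k (v, y) ->
  (patle (v, y) (u, x) <-> patle (burgeT (v, y)) (burgeT (u, x))).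
Proof.
move=> Bux Bvy.
rewrite (patle_colsE (Bur_size Bux) (Bur_size Bvy)).
rewrite (patle_colsE (size_burgeT _) (size_burgeT _)) !zip_burgeT.
split; first exact: burge_cols_patle.
move/burge_cols_patle.
by rewrite !burge_colsK ?(Bur_sorted_cols Bux) ?(Bur_sorted_cols Bvy).
Qed.
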